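(* Let $(\lambda_n)_{n\ge1}$ be real numbers with $\lambda_n\in(0,1)$ for all $n$, such that $\sum_{n=1}^\infty\lambda_n=\infty$, $n\prod_{k=1}^n(1-\lambda_k)\to0$ as $n\to\infty$, and $\sum_{i=1}^n\frac{\lambda_i}{1-\lambda_i}=O(n)$. Let $(a_n)_{n\ge1}$ be a nonnegative sequence satisfying $a_n\le(1-\lambda_n)a_{n-1}+\prod_{k=1}^n(1-\lambda_k)$ for all $n\ge2$. Then $\lim_{n\to\infty}a_n=0$. *)

(* concrete reals R. Sequences indexed from 1; the value at 0 is ignored. *)
From Stdlib Require Import Reals.
Open Scope R_scope.

Fixpoint prod1 (f : nat -> R) (n : nat) : R :=
  match n with
  | O => 1
  | S m => prod1 f m * f (S m)
  end.

Fixpoint sum1 (f : nat -> R) (n : nat) : R :=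
  match n with
  | O => 0
  | S m => sum1 f m + f (S m)
  end.

From Stdlib Require Import Reals Lra Lia.
Open Scope R_scope.

(* Writing [P_n = prod_{k=1}^n (1 - lam_k)], the recursion divided by [P_n]
   reads [a_n / P_n <= a_(n-1) / P_(n-1) + 1], so [a_n / P_n] grows at most
   linearly and [a_n = O(n P_n)], which tends to [0]. *)

Lemma prod1_pos (q : nat -> R) :
  (forall k, (1 <= k)%nat -> 0 < q k) -> forall n, 0 < prod1 q n.
Proof.
  intros Hq n; induction n as [|n IH]; simpl; [lra|].
  apply Rmult_lt_0_compat; [exact IH | apply Hq; lia].
Qed.

Lemma prod1_recursion_bound (q a : nat -> R) :
  (forall k, (1 <= k)%nat -> 0 < q k) ->
  (forall n, (2 <= n)%nat -> a n <= q n * a (n - 1)%nat + prod1 q n) ->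
  forall n, (1 <= n)%nat ->
    a n <= prod1 q n * (a 1%nat / prod1 q 1 + INR (n - 1)).
Proof.
  intros Hq Hrec n Hn.
  induction n as [|n IH]; [lia|].
  destruct n as [|m].
  - simpl INR. field_simplify; [lra|].
    pose proof (prod1_pos q Hq 1); lra.
  - specialize (IH ltac:(lia)).
    specialize (Hrec (S (S m)) ltac:(lia)).
    replace (S (S m) - 1)%nat with (S m) in * by lia.
    replace (S m - 1)%nat with m in IH by lia.
    change (prod1 q (S (S m))) with (prod1 q (S m) * q (S (S m))) in *.
    pose proof (Hq (S (S m)) ltac:(lia)) as Hqn.
    assert (q (S (S m)) * a (S m)
            <= q (S (S m)) * (prod1 q (S m) * (a 1%nat / prod1 q 1 + INR m)))
      by (apply Rmult_le_compat_l; lra).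
    rewrite S_INR; nra.
Qed.

Lemma prod1_recursion_bound_linear (q a : nat -> R) :
  (forall k, (1 <= k)%nat -> 0 < q k) ->
  0 <= a 1%nat ->
  (forall n, (2 <= n)%nat -> a n <= q n * a (n - 1)%nat + prod1 q n) ->
  exists K, 0 < K /\
    forall n, (1 <= n)%nat -> a n <= K * (INR n * prod1 q n).
Proof.
  intros Hq Ha1 Hrec.
  pose proof (prod1_pos q Hq 1) as HP1.
  assert (Hc : 0 <= a 1%nat / prod1 q 1) by (apply Rle_mult_inv_pos; lra).
  exists (a 1%nat / prod1 q 1 + 1); split; [lra|].
  intros n Hn.
  pose proof (prod1_recursion_bound q a Hq Hrec n Hn) as Hb.
  pose proof (prod1_pos q Hq n) as HPn.
  assert (Hn1 : 1 <= INR n) by (apply (le_INR 1); lia).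
  rewrite minus_INR in Hb by lia; simpl INR in Hb.
  assert (0 <= a 1%nat / prod1 q 1 * (INR n - 1) * prod1 q n)
    by (apply Rmult_le_pos; [apply Rmult_le_pos|]; lra).
  nra.
Qed.

Lemma Un_cv_0_dominated (a u : nat -> R) (K : R) (N : nat) :
  0 < K ->
  (forall n, (N <= n)%nat -> 0 <= a n <= K * u n) ->
  Un_cv u 0 -> Un_cv a 0.
Proof.
  intros HK Hdom Hu eps Heps.
  destruct (Hu (eps / K)) as [M HM]; [apply Rdiv_lt_0_compat; lra|].
  exists (max N M); intros n Hn.
  specialize (HM n ltac:(lia)); specialize (Hdom n ltac:(lia)).
  unfold R_dist in *; rewrite Rminus_0_r in *.
  assert (Hun : u n < eps / K) by (apply Rabs_def2 in HM; lra).
  apply (Rmult_lt_compat_l K) in Hun; [|exact HK].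
  replace (K * (eps / K)) with eps in Hun by (field; lra).
  rewrite Rabs_right; lra.
Qed.

Theorem corollary3p2 (lam a : nat -> R) :
  (forall n, (1 <= n)%nat -> 0 < lam n < 1) ->
  (* sum_{n>=1} lam_n = +infinity *)
  (forall M : R, exists N : nat, M < sum1 lam N) ->
  (* n * prod_{k=1}^n (1 - lam_k) -> 0 *)
  Un_cv (fun n => INR n * prod1 (fun k => 1 - lam k) n) 0 ->
  (* sum_{i=1}^n lam_i / (1 - lam_i) = O(n) *)
  (exists C : R, exists N0 : nat, forall n, (N0 <= n)%nat ->
      Rabs (sum1 (fun i => lam i / (1 - lam i)) n) <= C * INR n) ->
  (forall n, (1 <= n)%nat -> 0 <= a n) ->
  (forall n, (2 <= n)%nat ->
      a n <= (1 - lam n) * a (n - 1)%nat + prod1 (fun k => 1 - lam k) n) ->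
  Un_cv a 0.
Proof.
  intros Hlam _ Hcv _ Ha Hrec.
  assert (Hq : forall k, (1 <= k)%nat -> 0 < 1 - lam k)
    by (intros k Hk; specialize (Hlam k Hk); lra).
  destruct (prod1_recursion_bound_linear (fun k => 1 - lam k) a Hq
              (Ha 1%nat (le_n 1)) Hrec) as [K [HK Hbound]].
  refine (Un_cv_0_dominated a _ K 1 HK _ Hcv).
  intros n Hn; split; [apply Ha; exact Hn | exact (Hbound n Hn)].
Qed.
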